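(* Let $B$ be a Ferrers board with $n$ columns, and let $M$ be the maximum entry of its root vector $\xi(B)$. If the first occurrence of $M$ in $\xi(B)$ is in position $j$, then $B$ is connected by a sequence of edges in the rook equivalence graph $G(B)$ to a Ferrers board $B'$ whose root vector $\xi(B')$ agrees with $\xi(B)$ in the first $j$ positions and is weakly decreasing in the positions $i\ge j$.
   Context: A Ferrers board is given by a weakly increasing sequence of non-negative integers $B=(b_1,\ldots,b_n)$ of column heights; it is the set of unit cells in the first quadrant lying in column $i$ and rows $1,\ldots,b_i$. Prepending columns of height $0$ on the left does not change the board, and boards are compared using the same number of columns by such padding. A placement of $k$ rooks on $B$ is a set of $k$ cells of $B$ no two in the same row or column; $r_k(B)$ is the number of such placements. Two boards are rook equivalent if they have equal $r_k$ for all $k\ge 0$. The root vector of $B$ is $\xi(B)=\langle 0-b_1,1-b_2,\ldots,(n-1)-b_n\rangle$. The rook equivalence graph $G(B)$ has as vertices all Ferrers boards rook equivalent to $B$, and $\{B_1,B_2\}$ is an edge iff, written with the same number of columns, $B_1$ and $B_2$ differ in exactly two columns $i$ and $j$, where $B_1$ has $k$ more cells than $B_2$ in column $i$ and $k$ fewer cells than $B_2$ in column $j$, for some $k>0$. *)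

From mathcomp Require Import all_boot all_order all_algebra.
Set Implicit Arguments. Unset Strict Implicit. Unset Printing Implicit Defensive.
Import Order.TTheory GRing.Theory Num.Theory.

(* A Ferrers board is represented by the list [b_1; ...; b_n] of its column
   heights (column i+1 of the paper is index i here, 0-based). *)
Definition ferrers (b : seq nat) : bool := sorted leq b.

(* Cells of the board: pairs (column i, row r) with r < b_i (0-based rows).
   All rows are < sumn b, so 'I_(size b) * 'I_(sumn b) contains every cell. *)
Definition cell (b : seq nat) (c : 'I_(size b) * 'I_(sumn b)) : bool :=
  (c.2 < nth 0 b c.1)%N.

Definition placement (b : seq nat) (P : {set 'I_(size b) * 'I_(sumn b)}) : bool :=
  [forall c in P, cell c] &&
  [forall c in P, forall d in P, (c != d) ==> (c.1 != d.1) && (c.2 != d.2)].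

Definition rook_num (b : seq nat) (k : nat) : nat :=
  #|[set P : {set 'I_(size b) * 'I_(sumn b)} | placement P && (#|P| == k)]|.

Definition rook_equiv (b1 b2 : seq nat) : Prop :=
  forall k, rook_num b1 k = rook_num b2 k.

Definition root_vec (b : seq nat) : seq int :=
  [seq (i%:Z - (nth 0 b i)%:Z)%R | i <- iota 0 (size b)].

Definition pad (N : nat) (b : seq nat) : seq nat := nseq (N - size b) 0 ++ b.

Definition rg_edge (b1 b2 : seq nat) : Prop :=
  let N := maxn (size b1) (size b2) in
  let c1 := pad N b1 in let c2 := pad N b2 in
  exists i j k, [/\ [&& (i < N)%N, (j < N)%N & (0 < k)%N],
    nth 0 c1 i = nth 0 c2 i + k, nth 0 c2 j = nth 0 c1 j + k &
    (forall l, l != i -> l != j -> nth 0 c1 l = nth 0 c2 l)].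

Definition rg_vertex (B b : seq nat) : Prop := ferrers b /\ rook_equiv B b.

Inductive rg_connected (B : seq nat) : seq nat -> seq nat -> Prop :=
| rgc_refl b : rg_connected B b b
| rgc_step b1 b2 b3 : rg_vertex B b1 -> rg_vertex B b2 -> rg_edge b1 b2 ->
    rg_connected B b2 b3 -> rg_connected B b1 b3.

(* The factorization theorem sum_k r_k(B) x(x-1)...(x-n+k+1) = prod_i (x - xi_i)
   shows that Ferrers boards with the same number of columns whose root vectors
   are permutations of each other are rook equivalent.  If xi is not weakly
   decreasing from position j on, take the rightmost l admitting an ascent
   xi_i < xi_l with j < i < l, and then the leftmost such i.  Moving
   d = xi_l - xi_i cells from column i to column l swaps xi_i and xi_l, keeps the
   board a Ferrers board thanks to these extremal choices, and is an edge of
   G(B).  Since the potential sum_k (n - k) b_k drops at each such move, the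
   process stops, with xi weakly decreasing on positions >= j and unchanged on
   positions <= j. *)

From mathcomp Require Import all_boot all_order all_algebra.
From mathcomp Require Import zify ring lra.
Set Implicit Arguments. Unset Strict Implicit. Unset Printing Implicit Defensive.
Import Order.TTheory GRing.Theory Num.Theory.

Lemma nth_le_sumn (s : seq nat) i : nth 0 s i <= sumn s.
Proof.
by elim: s i => [|x s IH] [|i] //=; [apply: leq_addr | apply: leq_trans (IH i) (leq_addl _ _)].
Qed.

Local Open Scope ring_scope.

Lemma ffactnSrz (x k : nat) : (x ^_ k.+1)%:Z = (x ^_ k)%:Z * (x%:Z - k%:Z).
Proof.
have [le_kx | lt_xk] := leqP k x; first by rewrite ffactnSr PoszM subzn.
by rewrite !ffact_small ?mul0r //; apply: ltnW.
Qed.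

Local Close Scope ring_scope.

Section Placements.
Variables (n N : nat) (h : nat -> nat).
Local Notation square := ('I_n * 'I_N)%type.

Definition placements m k := [set P : {set square} |
  [&& [forall c in P, (c.1 < m) && (c.2 < h c.1)],
      [forall c in P, forall d in P, (c != d) ==> (c.1 != d.1) && (c.2 != d.2)]
    & #|P| == k]].

Lemma placementsP m k (P : {set square}) :
  reflect [/\ {in P, forall c : square, c.1 < m /\ c.2 < h c.1},
              {in P &, injective (fun c : square => c.1)},
              {in P &, injective (fun c : square => c.2)} & #|P| = k]
          (P \in placements m k).
Proof.
rewrite inE; apply: (iffP and3P) => [[/forall_inP onP /forall_inP apart /eqP]|].
  have sep c d : c \in P -> d \in P -> c != d -> (c.1 != d.1) && (c.2 != d.2).
    by move=> cP dP; move/forall_inP/(_ d dP)/implyP: (apart c cP).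
  split=> // [c /onP/andP // | c d cP dP eq_cd | c d cP dP eq_cd];
    case: (eqVneq c d) => // /(sep c d cP dP)/andP[/eqP ne1 /eqP ne2];
    [case: (ne1 eq_cd) | case: (ne2 eq_cd)].
case=> onP col_inj row_inj /eqP cardP; split=> //.
  by apply/forall_inP => c /onP[-> ->].
apply/forall_inP => c cP; apply/forall_inP => d dP; apply/implyP => ne_cd.
by apply/andP; split; apply: contra ne_cd => /eqP eq_cd; apply/eqP;
  [apply: col_inj | apply: row_inj].
Qed.

Lemma placements_no_rooks m : placements m 0 = [set set0].
Proof.
apply/setP => P; rewrite in_set1; apply/placementsP/eqP => [[_ _ _ /cards0_eq]//|->].
by split=> [c | c d | c d |]; rewrite ?inE ?cards0.
Qed.

Lemma placements_no_columns k : placements 0 k.+1 = set0.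
Proof.
apply/setP => P; rewrite in_set0; apply/negbTE/placementsP => -[onP _ _ cardP].
by have /card_gt0P[c /onP[]] : 0 < #|P| by rewrite cardP.
Qed.

Lemma card_ord_ltn t : t <= N -> #|[set r : 'I_N | r < t]| = t.
Proof.
move=> le_tN; have widen_inj : injective (widen_ord le_tN).
  by move=> a b /(congr1 val) /= /val_inj.
rewrite -[RHS]card_ord -(card_imset _ widen_inj); apply: eq_card => r.
rewrite inE; apply/idP/imsetP => [lt_rt | [r0 _ ->] /=]; last exact: ltn_ord.
by exists (Ordinal lt_rt) => //; apply: val_inj.
Qed.

Hypothesis h_le_N : forall i, i < n -> h i <= N.
Hypothesis h_mono : forall i i', i <= i' -> i' < n -> h i <= h i'.

Section LastColumn.
Variables (m : nat) (lt_mn : m < n).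
Let col : 'I_n := Ordinal lt_mn.
Let uses_col := [set P : {set square} | [exists c in P, c.1 == col]].
Let rows (Q : {set square}) := [set c.2 | c in Q].
Let free_rows (Q : {set square}) := [set r : 'I_N | r < h m] :\: rows Q.
Let extend (p : {set square} * 'I_N) := (col, p.2) |: p.1.
Let extensions k := [set p | (p.1 \in placements m k) && (p.2 \in free_rows p.1)].

Lemma placements_col_lt k Q c : Q \in placements m k -> c \in Q -> c.1 < m.
Proof. by move=> /placementsP[onQ _ _ _] /onQ[]. Qed.

Lemma placementsS_unused k : placements m.+1 k :\: uses_col = placements m k.
Proof.
apply/setP => P; rewrite in_setD [P \in uses_col]inE negb_exists_in.
apply/andP/placementsP => [[/forall_inP unused /placementsP[onP col_inj row_inj cardP]]|].
  split=> // c cP; have [lt_c1 lt_c2] := onP c cP; split=> //.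
  rewrite ltn_neqAle -ltnS lt_c1 andbT.
  by apply: contraNneq (unused c cP) => e; apply/eqP/val_inj.
case=> onP col_inj row_inj cardP; split.
  by apply/forall_inP => c /onP[lt_c1 _]; apply: contraTneq lt_c1 => ->; rewrite ltnn.
by apply/placementsP; split=> // c /onP[lt_c1 lt_c2]; split=> //; apply: ltnW.
Qed.

Lemma card_free_rows k Q :
  Q \in placements m k -> k <= h m /\ #|free_rows Q| = h m - k.
Proof.
move=> /[dup] QP /placementsP[onQ _ row_inj cardQ].
have card_rows : #|rows Q| = k by rewrite card_in_imset.
have sub_rows : rows Q \subset [set r : 'I_N | r < h m].
  apply/subsetP => _ /imsetP[c cQ ->]; rewrite inE; have [lt_c1 lt_c2] := onQ c cQ.
  by apply: leq_trans lt_c2 (h_mono (ltnW lt_c1) lt_mn).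
have := subset_leq_card sub_rows.
by rewrite cardsD (setIidPr sub_rows) card_rows card_ord_ltn ?h_le_N.
Qed.

Lemma placementsS_used k : placements m.+1 k.+1 :&: uses_col = extend @: extensions k.
Proof.
apply/setP => P; rewrite in_setI [P \in uses_col]inE; apply/andP/imsetP => [[]|[[Q r]]].
  move=> /placementsP[onP col_inj row_inj cardP] /exists_inP[c cP /eqP c1].
  exists (P :\ c, c.2); last by rewrite /extend /= -c1 -surjective_pairing setD1K.
  rewrite inE /=; apply/andP; split.
    apply/placementsP; split.
    - move=> d /setD1P[ne_dc dP]; have [lt_d1 lt_d2] := onP d dP; split=> //.
      rewrite ltn_neqAle -ltnS lt_d1 andbT; apply: contra ne_dc => /eqP d1m.
      by apply/eqP/col_inj => //; rewrite c1; apply: val_inj.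
    - by move=> d e /setD1P[_ dP] /setD1P[_ eP]; apply: col_inj.
    - by move=> d e /setD1P[_ dP] /setD1P[_ eP]; apply: row_inj.
    - by move: cardP; rewrite (cardsD1 c) cP add1n => -[].
  have [_] := onP c cP; rewrite c1 !inE => /= ->; rewrite andbT.
  apply/imsetP => -[d /setD1P[ne_dc dP] e]; apply/negP: ne_dc; apply/negPn/eqP.
  by apply: row_inj.
move=> ext_Qr ->{P}; rewrite inE /= in ext_Qr.
case/andP: ext_Qr => QP r_free; rewrite !inE in r_free; case/andP: r_free => r_new lt_r.
have /placementsP[onQ col_inj row_inj cardQ] := QP.
have lt_Q c : c \in Q -> c.1 < m by apply: placements_col_lt QP.
have col_new : (col, r) \notin Q by apply/negP => /lt_Q; rewrite ltnn.
split; last by apply/exists_inP; exists (col, r); rewrite ?setU11.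
apply/placementsP; split.
- move=> c /setU1P[-> // | cQ]; have [lt_c1 lt_c2] := onQ c cQ.
  by split=> //; apply: ltnW.
- move=> c d /setU1P[-> | cQ] /setU1P[-> | dQ] //= e.
  + by have := lt_Q d dQ; rewrite -e ltnn.
  + by have := lt_Q c cQ; rewrite e ltnn.
  + exact: col_inj.
- move=> c d /setU1P[-> | cQ] /setU1P[-> | dQ] //= e.
  + by case/negP: r_new; apply/imsetP; exists d.
  + by case/negP: r_new; apply/imsetP; exists c.
  + exact: row_inj.
- by rewrite cardsU1 col_new cardQ.
Qed.

Lemma extend_inj k : {in extensions k &, injective extend}.
Proof.
move=> [Q1 r1] [Q2 r2]; rewrite ![_ \in extensions k]inE /= => /andP[Q1P _] /andP[Q2P _].
rewrite /extend /= => e.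
have restrict Q r : Q \in placements m k -> Q = [set c in (col, r) |: Q | c.1 != col].
  move=> QP; apply/setP => c; rewrite !inE.
  case: (eqVneq c.1 col) => [c1 | ne_c1]; rewrite ?andbF ?andbT.
    by apply/negP => /(placements_col_lt QP); rewrite c1 ltnn.
  by have /negbTE-> : c != (col, r) by apply: contraNneq ne_c1 => ->.
have r12 : r1 = r2.
  have : (col, r1) \in (col, r2) |: Q2 by rewrite -e setU11.
  by case/setU1P => [[] // | /(placements_col_lt Q2P)]; rewrite ltnn.
by rewrite (restrict Q1 r1 Q1P) (restrict Q2 r2 Q2P) e r12.
Qed.

Lemma card_extensions k :
  #|extensions k| = \sum_(Q in placements m k) #|free_rows Q|.
Proof.
rewrite -sum1_card; under [RHS]eq_bigr => Q _ do rewrite -sum1_card.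
by rewrite pair_big_dep; apply: eq_bigl => -[Q r]; rewrite inE.
Qed.

Local Open Scope ring_scope.

(* A placement on m+1 columns either avoids column m, or has a rook there in
   one of the h m - k rows left free by the other k rooks: by monotonicity of h,
   all of those lie in rows below h m. *)
Lemma card_placementsS k :
  #|placements m.+1 k.+1|%:Z =
    #|placements m k.+1|%:Z + ((h m)%:Z - k%:Z) * #|placements m k|%:Z.
Proof.
rewrite -(cardsID uses_col (placements m.+1 k.+1)) placementsS_used placementsS_unused.
rewrite card_in_imset; last exact: extend_inj.
rewrite card_extensions PoszD addrC; congr (_ + _).
rewrite -natz natr_sum.
under eq_bigr => Q /card_free_rows[le_k ->] do rewrite natz -subzn //.
by rewrite sumr_const -mulr_natr natz.
Qed.

End LastColumn.

Local Open Scope ring_scope.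

Lemma card_placements_gt m k : (m <= n)%N -> (m < k)%N -> #|placements m k| = 0%N.
Proof.
elim: m k => [|m IH] [|k] // le_mn lt_mk; first by rewrite placements_no_columns cards0.
apply/eqP; rewrite -(eqz_nat _ 0) card_placementsS // !IH ?(ltnW le_mn) //.
  by rewrite mulr0 addr0.
exact: ltnW.
Qed.

Lemma placements_factorization m (x : nat) : (m <= n)%N ->
  \sum_(k < m.+1) #|placements m k|%:Z * (x ^_ (m - k))%:Z =
  \prod_(i < m) (x%:Z + (h i)%:Z - i%:Z).
Proof.
elim: m => [|m IH] le_mn.
  by rewrite big_ord1 big_ord0 placements_no_rooks cards1 ffactn0 mul1r.
rewrite [RHS]big_ord_recr /= -IH ?(ltnW le_mn) // big_distrl /=.
rewrite [LHS]big_ord_recl /= placements_no_rooks cards1 subn0 mul1r.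
under eq_bigr => i _ do rewrite /bump leq0n add1n subSS card_placementsS // mulrDl.
have ffact_step i : (i <= m)%N -> (x ^_ (m - i))%:Z * (x%:Z + (h m)%:Z - m%:Z) =
    (x ^_ (m.+1 - i))%:Z + ((h m)%:Z - i%:Z) * (x ^_ (m - i))%:Z.
  by move=> le_im; rewrite subSn // ffactnSrz -subzn //; ring.
under [RHS]eq_bigr => i _ do rewrite -mulrA (ffact_step i (ltn_ord i)) mulrDr mulrCA mulrA.
rewrite !big_split /= addrA; congr (_ + _).
rewrite [RHS]big_ord_recl big_ord_recr /= placements_no_rooks cards1 subn0 mul1r.
by rewrite card_placements_gt ?(ltnW le_mn) // mul0r addr0.
Qed.

End Placements.

Lemma ferrers_nth_mono (b : seq nat) : ferrers b ->
  forall i i', i <= i' -> i' < size b -> nth 0 b i <= nth 0 b i'.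
Proof.
move=> fb i i' le_ii' lt_i'b; apply: (sorted_leq_nth leq_trans) => //.
by rewrite inE (leq_ltn_trans le_ii').
Qed.

Lemma rook_num_placements (b : seq nat) k :
  rook_num b k = #|placements (size b) (sumn b) (nth 0 b) (size b) k|.
Proof.
apply: eq_card => P; rewrite !inE /placement -andbA; congr (_ && _).
by apply: eq_forallb => c; rewrite /cell ltn_ord.
Qed.

Local Open Scope ring_scope.

Lemma rook_num_gt (b : seq nat) k :
  ferrers b -> (size b < k)%N -> rook_num b k = 0%N.
Proof.
move=> fb lt_bk; rewrite rook_num_placements.
exact: card_placements_gt (fun i _ => nth_le_sumn b i) (ferrers_nth_mono fb)
  _ _ (leqnn _) lt_bk.
Qed.

Theorem rook_factorization (b : seq nat) (x : nat) : ferrers b ->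
  \sum_(k < (size b).+1) (rook_num b k)%:Z * (x ^_ (size b - k))%:Z =
  \prod_(z <- root_vec b) (x%:Z - z).
Proof.
move=> fb; under [LHS]eq_bigr do rewrite rook_num_placements.
rewrite (placements_factorization (fun i _ => nth_le_sumn b i) (ferrers_nth_mono fb)) //.
rewrite big_map -[X in iota _ X]subn0 -/(index_iota 0 _) big_mkord.
by apply: eq_bigr => i _; rewrite opprB addrA.
Qed.

(* Evaluating at x = t kills the terms with m - k > t: the system is triangular. *)
Lemma ffact_expansion_inj m (c c' : nat -> int) :
  (forall x : nat, \sum_(k < m.+1) c k * (x ^_ (m - k))%:Z =
                   \sum_(k < m.+1) c' k * (x ^_ (m - k))%:Z) ->
  forall k, (k <= m)%N -> c k = c' k.
Proof.
move=> eq_cc' k le_km; rewrite -(subKn le_km).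
elim/ltn_ind: (m - k)%N (leq_subr k m) => t IH le_tm.
have lt_tm : (m - t < m.+1)%N by rewrite ltnS leq_subr.
move/eqP: (eq_cc' t); rewrite -subr_eq0 -sumrB (bigD1 (Ordinal lt_tm)) //= big1.
  have fact_neq0 : (t`!)%:Z != 0 by rewrite -natz pnatr_eq0 -lt0n fact_gt0.
  rewrite addr0 -mulrBl subKn // ffactnn mulf_eq0 (negbTE fact_neq0) orbF.
  by rewrite subr_eq0 => /eqP.
move=> i; rewrite -val_eqE /= => ne_i.
have [lt_i | gt_i | eq_i] := ltngtP i (m - t); last by rewrite eq_i eqxx in ne_i.
  by rewrite ffact_small ?mulr0 ?subr0 //; lia.
have le_im : (i <= m)%N by rewrite -ltnS.
by rewrite -(subKn le_im) IH ?subrr ?leq_subr //; lia.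
Qed.

Theorem rook_equiv_perm_root_vec (b b' : seq nat) :
  ferrers b -> ferrers b' -> size b = size b' ->
  perm_eq (root_vec b) (root_vec b') -> rook_equiv b b'.
Proof.
move=> fb fb' eq_size perm_bb' k; have [le_kb | lt_bk] := leqP k (size b); last first.
  by rewrite !rook_num_gt -?eq_size.
apply/eqP; rewrite -eqz_nat; apply/eqP; move: k le_kb.
apply: ffact_expansion_inj => x.
by rewrite rook_factorization // eq_size rook_factorization // (perm_big _ perm_bb').
Qed.

Local Close Scope ring_scope.

Section SwapNth.
Variables (T : eqType) (x0 : T).

Definition swap_nth (s : seq T) i l :=
  set_nth x0 (set_nth x0 s i (nth x0 s l)) l (nth x0 s i).

Lemma size_swap_nth s i l : i < size s -> l < size s -> size (swap_nth s i l) = size s.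
Proof. by move=> lt_is lt_ls; rewrite /swap_nth !size_set_nth !(maxn_idPr _). Qed.

Lemma nth_swap_nth s i l k : nth x0 (swap_nth s i l) k =
  if k == l then nth x0 s i else if k == i then nth x0 s l else nth x0 s k.
Proof. by rewrite /swap_nth nth_set_nth /= nth_set_nth. Qed.

Lemma nth_le_count (a : pred T) s k : k < size s -> a (nth x0 s k) <= count a s.
Proof.
move=> lt_ks; case: (boolP (a _)) => // a_k; rewrite -has_count.
by apply/hasP; exists (nth x0 s k); rewrite ?mem_nth.
Qed.

Lemma perm_swap_nth s i l : i < size s -> l < size s -> perm_eq (swap_nth s i l) s.
Proof.
move=> lt_is lt_ls; apply/permP => a; rewrite /swap_nth.
rewrite !count_set_nth_ltn ?size_set_nth ?(maxn_idPr _) // nth_set_nth /=.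
have := nth_le_count a lt_is; case: eqP => [-> | _]; lia.
Qed.

End SwapNth.

Lemma size_root_vec (b : seq nat) : size (root_vec b) = size b.
Proof. by rewrite size_map size_iota. Qed.

Lemma nth_root_vec (b : seq nat) k : k < size b ->
  nth 0%R (root_vec b) k = (k%:Z - (nth 0%N b k)%:Z)%R.
Proof. by move=> lt_kb; rewrite (nth_map 0) ?size_iota // nth_iota. Qed.

Definition shift_cells (b : seq nat) i l d :=
  set_nth 0 (set_nth 0 b i (nth 0 b i - d)) l (nth 0 b l + d).

Lemma size_shift_cells (b : seq nat) i l d : i < size b -> l < size b ->
  size (shift_cells b i l d) = size b.
Proof. by move=> lt_ib lt_lb; rewrite !size_set_nth !(maxn_idPr _). Qed.

Lemma nth_shift_cells (b : seq nat) i l d k : nth 0 (shift_cells b i l d) k =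
  if k == l then nth 0 b l + d else if k == i then nth 0 b i - d else nth 0 b k.
Proof. by rewrite nth_set_nth /= nth_set_nth. Qed.

Lemma rg_edge_shift_cells (b : seq nat) i l d : i < size b -> l < size b ->
  i != l -> 0 < d -> d <= nth 0 b i -> rg_edge b (shift_cells b i l d).
Proof.
move=> lt_ib lt_lb ne_il d_gt0 le_d.
rewrite /rg_edge /pad size_shift_cells // maxnn subnn /=.
exists i, l, d; split.
- by rewrite lt_ib lt_lb d_gt0.
- by rewrite nth_shift_cells (negbTE ne_il) eqxx subnK.
- by rewrite nth_shift_cells eqxx.
- by move=> k /negbTE ne_ki /negbTE ne_kl; rewrite nth_shift_cells ne_ki ne_kl.
Qed.

Lemma ferrers_shift_cells (b : seq nat) i l d : ferrers b -> 0 < i -> i < l -> l < size b ->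
  nth 0 b i.-1 + d <= nth 0 b i ->
  (l.+1 < size b -> nth 0 b l + d <= nth 0 b l.+1) -> ferrers (shift_cells b i l d).
Proof.
case: i => // i /(sortedP 0) fb _ lt_il lt_lb /= le_prev le_next.
apply/(sortedP 0) => k; rewrite size_shift_cells //; last exact: ltn_trans lt_lb.
rewrite !nth_shift_cells; have [-> {k} | ne_kl] := eqVneq k l => lt_k1b.
  have := le_next lt_k1b; have := fb l lt_k1b.
  by rewrite eqSS; repeat (case: eqP => ?; try subst); lia.
have := fb k lt_k1b.
by rewrite eqSS; repeat (case: eqP => ?; try subst); lia.
Qed.

Lemma root_vec_shift_cells (b : seq nat) i l d : i < size b -> l < size b ->
  d <= nth 0 b i -> nth 0 b i + l = i + nth 0 b l + d ->
  root_vec (shift_cells b i l d) = swap_nth 0%R (root_vec b) i l.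
Proof.
move=> lt_ib lt_lb le_d balance; apply: (@eq_from_nth _ 0%R).
  by rewrite size_swap_nth !size_root_vec ?size_shift_cells.
rewrite size_root_vec size_shift_cells // => k lt_kb.
rewrite nth_swap_nth !nth_root_vec ?size_shift_cells // nth_shift_cells.
by repeat (case: ifP => /eqP ?; try subst); lia.
Qed.

Definition left_moment (b : seq nat) := \sum_(k < size b) (size b - k) * nth 0 b k.

Lemma left_moment_set_nth (b : seq nat) i x : i < size b ->
  left_moment (set_nth 0 b i x) + (size b - i) * nth 0 b i =
  left_moment b + (size b - i) * x.
Proof.
move=> lt_ib; rewrite /left_moment size_set_nth (maxn_idPr lt_ib).
rewrite [in LHS](bigD1 (Ordinal lt_ib)) // [in RHS](bigD1 (Ordinal lt_ib)) //=.
rewrite nth_set_nth /= eqxx (eq_bigr (fun k : 'I_ _ => (size b - k) * nth 0 b k)).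
  lia.
by move=> k; rewrite -val_eqE /= nth_set_nth /= => /negbTE ->.
Qed.

Lemma left_moment_shift_cells (b : seq nat) i l d : i < l -> l < size b -> d <= nth 0 b i ->
  left_moment (shift_cells b i l d) + (l - i) * d = left_moment b.
Proof.
move=> lt_il lt_lb le_d; have lt_ib := ltn_trans lt_il lt_lb.
have := left_moment_set_nth (nth 0 b i - d) lt_ib.
have := @left_moment_set_nth (set_nth 0 b i (nth 0 b i - d)) l (nth 0 b l + d).
rewrite size_set_nth (maxn_idPr lt_ib) nth_set_nth /= (gtn_eqF lt_il) => /(_ lt_lb).
rewrite -/(shift_cells b i l d).
have -> : size b - i = size b - l + (l - i) by lia.
set c := nth 0 b i - d; have -> : nth 0 b i = c + d by rewrite subnK.
rewrite !mulnDl !mulnDr; lia.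
Qed.

Local Open Scope ring_scope.

Lemma ascent_shift (b : seq nat) i l : ferrers b -> (0 < i < l)%N -> (l < size b)%N ->
  nth 0 (root_vec b) i < nth 0 (root_vec b) l ->
  nth 0 (root_vec b) l <= nth 0 (root_vec b) i.-1 + 1 ->
  ((l.+1 < size b)%N -> nth 0 (root_vec b) l.+1 <= nth 0 (root_vec b) i + 1) ->
  exists b', [/\ ferrers b', rg_edge b b',
                 root_vec b' = swap_nth 0 (root_vec b) i l &
                 (left_moment b' < left_moment b)%N].
Proof.
move=> fb /andP[i_gt0 lt_il] lt_lb; have lt_ib := ltn_trans lt_il lt_lb.
have lt_i1b : (i.-1 < size b)%N by rewrite (leq_ltn_trans (leq_pred i)).
move=> asc prev next; rewrite !nth_root_vec // in asc prev.
have {}next : (l.+1 < size b)%N -> (nth 0 b i + l <= nth 0 b l.+1 + i)%N.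
  by move=> lt_l1b; have := next lt_l1b; rewrite !nth_root_vec //; lia.
set d := (nth 0 b i + l - (i + nth 0 b l))%N.
exists (shift_cells b i l d); split.
- by apply: ferrers_shift_cells => // [|/next]; lia.
- by apply: rg_edge_shift_cells; rewrite ?(ltn_eqF lt_il) //; lia.
- by apply: root_vec_shift_cells => //; lia.
- have le_d : (d <= nth 0 b i)%N by lia.
  have : (0 < (l - i) * d)%N by rewrite muln_gt0 subn_gt0 lt_il /=; lia.
  have := left_moment_shift_cells lt_il lt_lb le_d; lia.
Qed.

(* The extremal choice of l, then i, is what keeps the board Ferrers in
   [ascent_shift]. *)
Lemma nonincreasing_or_extremal_ascent (X : nat -> int) n j : (j < n)%N ->
  (forall k, (k < n)%N -> X k <= X j) ->
  (forall i i', (j <= i <= i')%N -> (i' < n)%N -> X i' <= X i) \/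
  exists i l, [/\ (j < i < l)%N, (l < n)%N, X i < X l, X l <= X i.-1 &
                  ((l.+1 < n)%N -> X l.+1 <= X i)].
Proof.
move=> lt_jn X_max.
pose ascent_to l := [exists i : 'I_n, (j < i < l)%N && (X i < X l)].
have [/existsP[l0 asc_l0] | /existsPn no_ascent] := boolP [exists l : 'I_n, ascent_to l].
  right.
  have ex_l : exists l, (l < n)%N && ascent_to l by exists l0; rewrite ltn_ord.
  have ub_l l : (l < n)%N && ascent_to l -> (l <= n)%N by case/andP=> /ltnW.
  have [l /andP[lt_ln /existsP[i0 asc_i0]] l_max] := ex_maxnP ex_l ub_l.
  have ex_i : exists i, (j < i < l)%N && (X i < X l) by exists i0.
  have [i /andP[/andP[lt_ji lt_il] asc] i_min] := ex_minnP ex_i.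
  exists i, l; split=> //; first by rewrite lt_ji.
    have [lt_ji1 | | <-] := ltngtP j i.-1; last exact: X_max.
      rewrite leNgt; apply/negP => lt_X.
      have := i_min i.-1; rewrite lt_ji1 lt_X andbT /=.
      by move/(_ (leq_ltn_trans (leq_pred i) lt_il)); lia.
    by lia.
  move=> lt_l1n; rewrite leNgt; apply/negP => lt_X.
  suff : ascent_to l.+1 by move/(conj lt_l1n)/andP/l_max; rewrite ltnn.
  apply/existsP; exists (Ordinal (ltn_trans lt_il lt_ln)).
  by rewrite /= lt_ji ltnS (ltnW lt_il) lt_X.
left => i i' /andP[le_ji le_ii'] lt_i'n; rewrite leNgt; apply/negP => lt_X.
have lt_ii' : (i < i')%N.
  by rewrite ltn_neqAle le_ii' andbT; apply: contraTneq lt_X => ->; rewrite ltxx.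
have lt_ji : (j < i)%N.
  by rewrite ltn_neqAle le_ji andbT; apply: contraTneq lt_X => <-; rewrite -leNgt X_max.
have /negP := no_ascent (Ordinal lt_i'n); apply; apply/existsP.
by exists (Ordinal (ltn_trans lt_ii' lt_i'n)); rewrite /= lt_ji lt_ii' lt_X.
Qed.

Section SortTail.
Variables (B : seq nat) (j : nat).
Hypothesis lt_jB : (j < size B)%N.
Local Notation xi b := (nth 0 (root_vec b)).

Lemma sort_tail b : ferrers b -> size b = size B -> rook_equiv B b ->
  (forall k, (k <= j)%N -> xi b k = xi B k) ->
  (forall k, (k < size B)%N -> xi b k <= xi b j) ->
  exists B', [/\ [/\ size B' = size B, ferrers B' & rook_equiv B B'],
                 rg_connected B b B',
                 (forall i, (i <= j)%N -> xi B' i = xi B i) &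
                 (forall i i', (j <= i)%N -> (i <= i')%N -> (i' < size B)%N ->
                    xi B' i' <= xi B' i)].
Proof.
have [t] := ubnP (left_moment b); elim: t b => // t IH b lt_bt.
move=> fb size_b equiv_Bb head_b max_b.
have [sorted_b | [i [l [/andP[lt_ji lt_il] lt_lB asc prev next]]]] :=
  nonincreasing_or_extremal_ascent lt_jB max_b.
  exists b; split=> //; first exact: rgc_refl.
  by move=> i i' le_ji le_ii'; apply: sorted_b; rewrite le_ji.
have lt_lb : (l < size b)%N by rewrite size_b.
have range_il : (0 < i < l)%N by rewrite lt_il andbT; lia.
have prev1 : xi b l <= xi b i.-1 + 1 by lia.
have next1 : (l.+1 < size b)%N -> xi b l.+1 <= xi b i + 1.
  by rewrite size_b => /next; lia.
have [b' [fb' edge_bb' root_b' lt_moment]] := ascent_shift fb range_il lt_lb asc prev1 next1.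
have lt_ib := ltn_trans lt_il lt_lb.
have size_b' : size b' = size B.
  by rewrite -size_root_vec root_b' size_swap_nth ?size_root_vec.
have xi_b' k : xi b' k = if k == l then xi b i else if k == i then xi b l else xi b k.
  by rewrite root_b' nth_swap_nth.
have equiv_bb' : rook_equiv b b'.
  apply: rook_equiv_perm_root_vec; rewrite ?size_b ?size_b' //.
  by rewrite root_b' perm_sym perm_swap_nth ?size_root_vec.
have head_b' k : (k <= j)%N -> xi b' k = xi B k.
  by move=> le_kj; rewrite xi_b' !ifN_eq ?head_b //; lia.
have max_b' k : (k < size B)%N -> xi b' k <= xi b' j.
  move=> lt_kB; rewrite (xi_b' j) !ifN_eq; try lia.
  by rewrite xi_b'; case: ifP => _; [|case: ifP => _]; apply: max_b; lia.
have equiv_Bb' k : rook_num B k = rook_num b' k by rewrite equiv_Bb equiv_bb'.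
have [B' [? conn_b'B' ? ?]] :=
  IH b' (leq_trans lt_moment lt_bt) fb' size_b' equiv_Bb' head_b' max_b'.
by exists B'; split=> //; apply: rgc_step conn_b'B'.
Qed.

End SortTail.

Local Close Scope ring_scope.
Unset Implicit Arguments.

(* j is 0-based here: position j+1 in the paper. *)
Theorem lemma8 (B : seq nat) (j : nat) :
  ferrers B ->
  (j < size B)%N ->
  (forall i, (i < size B)%N -> (nth 0%R (root_vec B) i <= nth 0%R (root_vec B) j)%R) ->
  (forall i, (i < j)%N -> (nth 0%R (root_vec B) i < nth 0%R (root_vec B) j)%R) ->
  exists B' : seq nat,
    [/\ [/\ size B' = size B, ferrers B' & rook_equiv B B'],
        rg_connected B B B',
        (forall i, (i <= j)%N -> nth 0%R (root_vec B') i = nth 0%R (root_vec B) i) &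
        (forall i i', (j <= i)%N -> (i <= i')%N -> (i' < size B)%N ->
           (nth 0%R (root_vec B') i' <= nth 0%R (root_vec B') i)%R)].
Proof.
move=> fB lt_jB max_B _.
by apply: (sort_tail lt_jB fB).
Qed.
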